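(* Let $\mathcal{A}\in\mathbb{C}^{I_{1\ldots N}\times I_{1\ldots N}}$, and let $\mathcal{M},\mathcal{N}\in\mathbb{C}^{I_{1\ldots N}\times I_{1\ldots N}}$ be Hermitian positive definite tensors. Let $\{\mathcal{U}_1,\ldots,\mathcal{U}_r\}\subset\mathbb{C}^{I_{1\ldots N}}$ be $\mathcal{M}$-orthonormal and $\{\mathcal{V}_1,\ldots,\mathcal{V}_r\}\subset\mathbb{C}^{I_{1\ldots N}}$ be $\mathcal{N}^{-1}$-orthonormal. If $\mathcal{A}=\mathcal{U}_1*_1\mathcal{V}_1^H+\cdots+\mathcal{U}_r*_1\mathcal{V}_r^H$, then $$\mathcal{A}^{\dagger}_{\mathcal{M},\mathcal{N}}=\mathcal{N}^{-1}*_N(\mathcal{V}_1*_1\mathcal{U}_1^H+\cdots+\mathcal{V}_r*_1\mathcal{U}_r^H)*_N\mathcal{M}$$ and $W(\mathcal{A}^{\dagger}_{\mathcal{M},\mathcal{N}})=W(\mathcal{A}^{\#}_{\mathcal{M}\mathcal{N}})$.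
   Context: Write $I_{1\ldots N}$ for $I_1\times\cdots\times I_N$. Einstein product: $(\mathcal{A}*_N\mathcal{B})_{i_1\ldots i_Nj_1\ldots j_L}=\sum_{k_1,\ldots,k_N}a_{i_1\ldots i_Nk_1\ldots k_N}b_{k_1\ldots k_Nj_1\ldots j_L}$ (also when $\mathcal{B}\in\mathbb{C}^{I_{1\ldots N}}$). $\mathcal{A}^H$ is the conjugate transpose; inverses are w.r.t. $*_N$. For $\mathcal{X},\mathcal{Y}\in\mathbb{C}^{I_{1\ldots N}}$, $\mathcal{X}*_1\mathcal{Y}^H$ denotes the tensor in $\mathbb{C}^{I_{1\ldots N}\times I_{1\ldots N}}$ with $(i_1,\ldots,i_N,j_1,\ldots,j_N)$-entry $x_{i_1\ldots i_N}\overline{y_{j_1\ldots j_N}}$. $\langle\mathcal{X},\mathcal{Y}\rangle=\mathcal{Y}^H*_N\mathcal{X}=\sum\overline{y_{i_1\ldots i_N}}x_{i_1\ldots i_N}$ and $\|\mathcal{X}\|=\langle\mathcal{X},\mathcal{X}\rangle^{1/2}$. $\mathcal{M}$ is Hermitian positive definite if $\mathcal{M}^H=\mathcal{M}$ and $\langle\mathcal{M}*_N\mathcal{X},\mathcal{X}\rangle>0$ for nonzero $\mathcal{X}$. For a Hermitian positive definite $\mathcal{P}$, a set $\{\mathcal{X}_1,\ldots,\mathcal{X}_r\}$ is $\mathcal{P}$-orthonormal if $\langle\mathcal{P}*_N\mathcal{X}_i,\mathcal{X}_j\rangle=\delta_{ij}$. Numerical range: $W(\mathcal{A})=\{\langle\mathcal{A}*_N\mathcal{X},\mathcal{X}\rangle:\|\mathcal{X}\|=1\}$.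 Weighted conjugate transpose: $\mathcal{A}^{\#}_{\mathcal{M}\mathcal{N}}=\mathcal{N}^{-1}*_N\mathcal{A}^H*_N\mathcal{M}$. Weighted Moore-Penrose inverse $\mathcal{A}^{\dagger}_{\mathcal{M},\mathcal{N}}$: the unique $\mathcal{X}$ with $\mathcal{A}*_N\mathcal{X}*_N\mathcal{A}=\mathcal{A}$, $\mathcal{X}*_N\mathcal{A}*_N\mathcal{X}=\mathcal{X}$, $(\mathcal{M}*_N\mathcal{A}*_N\mathcal{X})^H=\mathcal{M}*_N\mathcal{A}*_N\mathcal{X}$, $(\mathcal{N}*_N\mathcal{X}*_N\mathcal{A})^H=\mathcal{N}*_N\mathcal{X}*_N\mathcal{A}$. *)

From HB Require Import structures.
From mathcomp Require Import all_boot all_order all_algebra.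
From mathcomp Require Import complex reals.
From Stdlib Require Import ClassicalEpsilon.
Set Implicit Arguments. Unset Strict Implicit. Unset Printing Implicit Defensive.
Import Order.TTheory GRing.Theory Num.Theory.
Local Open Scope ring_scope.

(* Multi-indices (i_1,...,i_N) in I_1 x ... x I_N, with dims d : 'I_N -> nat. *)
Definition idx (N : nat) (d : 'I_N -> nat) : finType :=
  {dffun forall k : 'I_N, 'I_(d k)}.

Section Tensors.
Variables (C : numClosedFieldType) (N : nat) (d : 'I_N -> nat).
Local Notation I := (idx d).

Definition tensN := {ffun I -> C}.
Definition tens2N := {ffun I * I -> C}.

Definition ein (A B : tens2N) : tens2N :=
  [ffun ij => \sum_(k : I) A (ij.1, k) * B (k, ij.2)].
Definition einv (A : tens2N) (X : tensN) : tensN :=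
  [ffun i => \sum_(k : I) A (i, k) * X k].
Definition tid : tens2N := [ffun ij => (ij.1 == ij.2)%:R].
Definition tH (A : tens2N) : tens2N := [ffun ij => (A (ij.2, ij.1))^*].
Definition outer (X Y : tensN) : tens2N := [ffun ij => X ij.1 * (Y ij.2)^*].
Definition inner (X Y : tensN) : C := \sum_(i : I) (Y i)^* * X i.
Definition tnorm (X : tensN) : C := sqrtC (inner X X).

Definition tens_hermitian (A : tens2N) : Prop := tH A = A.
Definition tens_hpd (A : tens2N) : Prop :=
  tens_hermitian A /\ forall X : tensN, X != 0 -> 0 < inner (einv A X) X.

Definition is_tinv (A B : tens2N) : Prop := ein A B = tid /\ ein B A = tid.

Definition tens_orthonormal (P : tens2N) (r : nat) (X : 'I_r -> tensN) : Prop :=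
  forall i j : 'I_r, inner (einv P (X i)) (X j) = (i == j)%:R.

Definition numrange (A : tens2N) : C -> Prop :=
  fun z => exists X : tensN, tnorm X = 1 /\ z = inner (einv A X) X.

(* weighted conjugate transpose A^#_{MN} = N^{-1} *N A^H *N M, N^{-1} = Ninv *)
Definition wct (A M Ninv : tens2N) : tens2N := ein (ein Ninv (tH A)) M.

Definition wpenrose (A M N' X : tens2N) : Prop :=
  [/\ ein (ein A X) A = A, ein (ein X A) X = X,
      tH (ein M (ein A X)) = ein M (ein A X)
    & tH (ein N' (ein X A)) = ein N' (ein X A)].

Definition wmpinv (A M N' : tens2N) : tens2N :=
  epsilon (inhabits (0 : tens2N)) (wpenrose A M N').

End Tensors.

From HB Require Import structures.
From mathcomp Require Import all_boot all_order all_algebra.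
From mathcomp Require Import complex reals.
From Stdlib Require Import ClassicalEpsilon.
Set Implicit Arguments. Unset Strict Implicit. Unset Printing Implicit Defensive.
Import Order.TTheory GRing.Theory Num.Theory.
Local Open Scope ring_scope.

(* With U'_k = M U_k and V'_k = N^-1 V_k, the orthonormality hypotheses make
   (U, U') and (V', V) biorthogonal pairs of families.  For
   X = sum_k V'_k *1 U'_k^H this gives A X = sum_k U_k *1 U'_k^H and
   X A = sum_k V'_k *1 V_k^H, hence A X A = A, X A X = X, and the Hermitian
   tensors M A X = sum_k U'_k *1 U'_k^H, N X A = sum_k V_k *1 V_k^H: X solves
   the weighted Penrose equations, whose solution is unique because M and N
   are positive definite.  As (U_k *1 V_k^H)^H = V_k *1 U_k^H, X is also
   A^#_MN, so the two numerical ranges are equal. *)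

Section Tensors.
Variables (C : numClosedFieldType) (N : nat) (d : 'I_N -> nat).
Local Notation I := (idx d).
Local Notation T1 := (tensN C d).
Local Notation T2 := (tens2N C d).

Lemma einA (A B D : T2) : ein (ein A B) D = ein A (ein B D).
Proof.
apply/ffunP=> -[i j]; rewrite !ffunE /=.
under eq_bigr do rewrite ffunE /= big_distrl.
under [RHS]eq_bigr do rewrite ffunE /= big_distrr.
rewrite exchange_big /=; apply: eq_bigr => k _; apply: eq_bigr => l _.
by rewrite mulrA.
Qed.

Lemma einv_ein (A B : T2) (X : T1) : einv (ein A B) X = einv A (einv B X).
Proof.
apply/ffunP=> i; rewrite !ffunE /=.
under eq_bigr do rewrite ffunE /= big_distrl.
under [RHS]eq_bigr do rewrite ffunE /= big_distrr.
rewrite exchange_big /=; apply: eq_bigr => k _; apply: eq_bigr => l _.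
by rewrite mulrA.
Qed.

Lemma einv_tid (X : T1) : einv (tid C d) X = X.
Proof.
apply/ffunP=> i; rewrite !ffunE (bigD1 i) //= ffunE /= eqxx mul1r big1 ?addr0 //.
by move=> k /negbTE ki; rewrite ffunE /= eq_sym ki mul0r.
Qed.

Lemma einvB (A : T2) (X Y : T1) : einv A (X - Y) = einv A X - einv A Y.
Proof.
apply/ffunP=> i; rewrite !ffunE -sumrB.
by apply: eq_bigr => k _; rewrite !ffunE mulrBr.
Qed.

Lemma ein_suml r (F : 'I_r -> T2) (B : T2) :
  ein (\sum_(k < r) F k) B = \sum_(k < r) ein (F k) B.
Proof.
apply/ffunP=> -[i j]; rewrite !ffunE /= sum_ffunE.
under eq_bigr do rewrite sum_ffunE big_distrl.
by rewrite exchange_big; apply: eq_bigr => k _; rewrite ffunE.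
Qed.

Lemma ein_sumr r (F : 'I_r -> T2) (B : T2) :
  ein B (\sum_(k < r) F k) = \sum_(k < r) ein B (F k).
Proof.
apply/ffunP=> -[i j]; rewrite !ffunE /= sum_ffunE.
under eq_bigr do rewrite sum_ffunE big_distrr.
by rewrite exchange_big; apply: eq_bigr => k _; rewrite ffunE.
Qed.

Lemma tH_ein (A B : T2) : tH (ein A B) = ein (tH B) (tH A).
Proof.
apply/ffunP=> -[i j]; rewrite !ffunE /= rmorph_sum.
by apply: eq_bigr => k _; rewrite !ffunE /= rmorphM /= mulrC.
Qed.

Lemma tH_sum r (F : 'I_r -> T2) : tH (\sum_(k < r) F k) = \sum_(k < r) tH (F k).
Proof.
apply/ffunP=> -[i j]; rewrite !ffunE /= !sum_ffunE rmorph_sum.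
by apply: eq_bigr => k _; rewrite ffunE.
Qed.

Lemma inner_conj (X Y : T1) : inner X Y = (inner Y X)^*.
Proof.
rewrite /inner rmorph_sum; apply: eq_bigr => k _.
by rewrite rmorphM /= conjCK mulrC.
Qed.

Lemma inner0l (X : T1) : inner 0 X = 0.
Proof. by rewrite /inner big1 // => i _; rewrite ffunE mulr0. Qed.

Lemma ein_outer (B : T2) (X Y : T1) : ein B (outer X Y) = outer (einv B X) Y.
Proof.
apply/ffunP=> -[i j]; rewrite !ffunE /= mulr_suml.
by apply: eq_bigr => k _; rewrite !ffunE /= mulrA.
Qed.

Lemma outer_ein (X Y : T1) (B : T2) : ein (outer X Y) B = outer X (einv (tH B) Y).
Proof.
apply/ffunP=> -[i j]; rewrite !ffunE /= rmorph_sum mulr_sumr.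
apply: eq_bigr => k _; rewrite !ffunE /= rmorphM /= conjCK.
by rewrite -mulrA [_ * B _]mulrC.
Qed.

Lemma ein_outer_outerE (X Y Z W : T1) ij :
  ein (outer X Y) (outer Z W) ij = inner Z Y * outer X W ij.
Proof.
rewrite ein_outer !ffunE /inner !mulr_suml.
by apply: eq_bigr => k _; rewrite !ffunE /= mulrCA !mulrA.
Qed.

Lemma tH_outer (X Y : T1) : tH (outer X Y) = outer Y X.
Proof. by apply/ffunP=> -[i j]; rewrite !ffunE /= rmorphM /= conjCK mulrC. Qed.

Lemma tH_sum_outer r (X Y : 'I_r -> T1) :
  tH (\sum_(k < r) outer (X k) (Y k)) = \sum_(k < r) outer (Y k) (X k).
Proof. by rewrite tH_sum; apply: eq_bigr => k _; rewrite tH_outer. Qed.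

Lemma ein_sum_outer r (P Q R S : 'I_r -> T1) :
  (forall k l, inner (R l) (Q k) = (l == k)%:R) ->
  ein (\sum_(k < r) outer (P k) (Q k)) (\sum_(l < r) outer (R l) (S l))
  = \sum_(k < r) outer (P k) (S k).
Proof.
move=> biorth; apply/ffunP=> ij; rewrite ein_suml !sum_ffunE.
apply: eq_bigr => k _; rewrite ein_sumr sum_ffunE.
under eq_bigr do rewrite ein_outer_outerE biorth.
rewrite (bigD1 k) //= eqxx mul1r big1 ?addr0 // => l /negbTE ->.
by rewrite mul0r.
Qed.

Definition tcol (B : T2) (j : I) : T1 := [ffun i => B (i, j)].

Lemma tcol_ein (A B : T2) j : tcol (ein A B) j = einv A (tcol B j).
Proof.
by apply/ffunP=> i; rewrite !ffunE; apply: eq_bigr => k _; rewrite ffunE.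
Qed.

Lemma tcol_inj (B D : T2) : (forall j, tcol B j = tcol D j) -> B = D.
Proof.
move=> eqBD; apply/ffunP=> -[i j].
by move/ffunP: (eqBD j) => /(_ i); rewrite !ffunE.
Qed.

Lemma hpd_einv_inj (M : T2) : tens_hpd M -> injective (einv M).
Proof.
move=> [_ Mpos] X Y eqMXY; apply/eqP; rewrite -subr_eq0; apply/negPn/negP.
by move=> /Mpos; rewrite einvB eqMXY subrr inner0l ltxx.
Qed.

Lemma hpd_ein_inj (M : T2) : tens_hpd M -> injective (ein M).
Proof.
move=> hM B D eqMBD; apply: tcol_inj => j.
by apply: (hpd_einv_inj hM); rewrite -!tcol_ein eqMBD.
Qed.

(* [F E = E] and [E F = F] say that the idempotents E and F have the same
   range; [E F = E] and [F E = F] that they have the same kernel. *)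
Lemma herm_proj_eq_range (M E F : T2) : tens_hermitian M ->
  tens_hermitian (ein M E) -> tens_hermitian (ein M F) ->
  ein F E = E -> ein E F = F -> ein M E = ein M F.
Proof.
move=> hM hE hF FE EF.
by rewrite -{1}FE -einA -{1}hF tH_ein hM einA -hE -tH_ein einA EF hF.
Qed.

Lemma herm_proj_eq_kernel (M E F : T2) : tens_hermitian M ->
  tens_hermitian (ein M E) -> tens_hermitian (ein M F) ->
  ein E F = E -> ein F E = F -> ein M E = ein M F.
Proof.
move=> hM hE hF EF FE.
by rewrite -{1}EF -einA -{1}hE tH_ein hM einA -{1}hF -tH_ein einA FE hF.
Qed.

Lemma wpenrose_uniq (A M N' X Y : T2) : tens_hpd M -> tens_hpd N' ->
  wpenrose A M N' X -> wpenrose A M N' Y -> X = Y.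
Proof.
move=> hM hN [AXA XAX MAX NXA] [AYA YAY MAY NYA].
have eqAXY : ein A X = ein A Y.
  apply: (hpd_ein_inj hM); apply: herm_proj_eq_range => //; first exact: hM.1.
    by rewrite -einA AYA.
  by rewrite -einA AXA.
have eqXYA : ein X A = ein Y A.
  apply: (hpd_ein_inj hN); apply: herm_proj_eq_kernel => //; first exact: hN.1.
    by rewrite einA -[ein A (ein Y A)]einA AYA.
  by rewrite einA -[ein A (ein X A)]einA AXA.
by rewrite -XAX einA eqAXY -einA eqXYA YAY.
Qed.

Lemma wmpinv_eq (A M N' X : T2) : tens_hpd M -> tens_hpd N' ->
  wpenrose A M N' X -> wmpinv A M N' = X.
Proof.
move=> hM hN hX; apply: (wpenrose_uniq hM hN _ hX).
exact: (epsilon_spec (inhabits (0 : T2)) _ (ex_intro _ X hX)).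
Qed.

Lemma wpenrose_sum_outer r (M N' : T2) (U V U' V' : 'I_r -> T1) :
  (forall k, einv M (U k) = U' k) -> (forall k, einv N' (V' k) = V k) ->
  (forall k l, inner (U l) (U' k) = (l == k)%:R) ->
  (forall k l, inner (V' l) (V k) = (l == k)%:R) ->
  wpenrose (\sum_(k < r) outer (U k) (V k)) M N'
           (\sum_(k < r) outer (V' k) (U' k)).
Proof.
move=> MU NV' biorthU biorthV.
have AX := ein_sum_outer U U' biorthV.
have XA := ein_sum_outer V' V biorthU.
split.
- by rewrite AX ein_sum_outer.
- by rewrite XA ein_sum_outer.
- rewrite AX ein_sumr; under eq_bigr => k _ do rewrite ein_outer MU.
  exact: tH_sum_outer.
- rewrite XA ein_sumr; under eq_bigr => k _ do rewrite ein_outer NV'.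
  exact: tH_sum_outer.
Qed.

End Tensors.

Local Open Scope complex_scope.

Theorem theorem6p13 (R : realType) (N : nat) (d : 'I_N -> nat)
  (A M Nt Ninv : tens2N R[i] d) (r : nat) (U V : 'I_r -> tensN R[i] d) :
  tens_hpd M -> tens_hpd Nt -> is_tinv Nt Ninv ->
  tens_orthonormal M U -> tens_orthonormal Ninv V ->
  A = \sum_(k < r) outer (U k) (V k) ->
  wmpinv A M Nt = ein (ein Ninv (\sum_(k < r) outer (V k) (U k))) M /\
  numrange (wmpinv A M Nt) = numrange (wct A M Ninv).
Proof.
move=> hM hN [NNinv _] orthU orthV ->.
set X := ein (ein Ninv _) M.
have wctE : wct (\sum_(k < r) outer (U k) (V k)) M Ninv = X.
  by rewrite /wct tH_sum_outer.
suff wmpinvE : wmpinv (\sum_(k < r) outer (U k) (V k)) M Nt = X.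
  by rewrite wmpinvE wctE.
have -> : X = \sum_(k < r) outer (einv Ninv (V k)) (einv M (U k)).
  rewrite /X ein_sumr ein_suml; apply: eq_bigr => k _.
  by rewrite ein_outer outer_ein hM.1.
apply: wmpinv_eq => //; apply: wpenrose_sum_outer => // k.
- by rewrite -einv_ein NNinv einv_tid.
- by move=> l; rewrite inner_conj orthU conjC_nat eq_sym.
Qed.
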